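(* Let $A$ be any algebra (over a field of characteristic $0$) that is assosymmetric and satisfies $a(bc)=b(ac)$ for all $a,b,c$. Then for all $a,b,c,d\in A$: \[ ((ab)c)d=((ac)b)d, \] \[ d(c(ab))=2d((ab)c)+((ac)d)b-2((ab)d)c, \] \[ d((ac)b)=d((ab)c)+((ac)d)b-((ab)d)c, \] \[ c((ad)b)=d((ac)b). \]
   Context: An algebra is assosymmetric if its associator $(x,y,z)=(xy)z-x(yz)$ is invariant under all permutations of $x,y,z$. This variety is the Koszul dual of the variety of left-symmetric algebras satisfying $(ab)c-(ba)c-(ac)b+(ca)b+(bc)a-(cb)a=0$. *)

From HB Require Import structures.
From mathcomp Require Import all_boot all_order all_algebra.
Set Implicit Arguments. Unset Strict Implicit. Unset Printing Implicit Defensive.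
Import GRing.Theory.
Local Open Scope ring_scope.

Definition bilinear_mul (K : fieldType) (V : lmodType K) (mul : V -> V -> V) :=
  (forall (a : K) (x y z : V), mul (a *: x + y) z = a *: mul x z + mul y z) /\
  (forall (a : K) (x y z : V), mul x (a *: y + z) = a *: mul x y + mul x z).

Definition associator (K : fieldType) (V : lmodType K) (mul : V -> V -> V)
  (x y z : V) : V := mul (mul x y) z - mul x (mul y z).

Definition assosymmetric (K : fieldType) (V : lmodType K) (mul : V -> V -> V) :=
  forall x y z : V,
    let A := associator mul in
    [/\ A x y z = A y x z, A x y z = A x z y, A x y z = A y z x,
        A x y z = A z x y & A x y z = A z y x].

Definition char0 (K : fieldType) := [pchar K] =i pred0.

From mathcomp Require Import all_boot all_order all_algebra.
Import GRing.Theory.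
Local Open Scope ring_scope.
Set Implicit Arguments. Unset Strict Implicit. Unset Printing Implicit Defensive.

(* Left commutativity turns the associator of a product into a left multiple:
   (xy, z, w) = (z, w, xy) = (zw)(xy) - z(w(xy)) = x((zw)y) - x(z(wy)) = x(y, z, w).
   As (xy)z = (yx)z, the left side is symmetric in x and y, so x((yz)w) is
   symmetric in x, y, z.  All four identities follow by expanding (xy, z, w)
   as ((xy)z)w - z((xy)w) and permuting. *)

Lemma subr_swap (V : zmodType) (u v p q : V) : p - u = q - v -> u = v + p - q.
Proof. by move=> e; rewrite -[u](subKr p) e opprB addrA (addrC p). Qed.

Section LeftCommutativeAssosymmetric.

Variables (K : fieldType) (V : lmodType K) (mul : V -> V -> V).

Local Notation "x ⋅ y" := (mul x y) (at level 40, left associativity).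
Local Notation assoc := (associator mul).

Hypotheses (mul_bilinear : bilinear_mul mul) (assoc_sym : assosymmetric mul).
Hypothesis mulCA : forall x y z : V, x ⋅ (y ⋅ z) = y ⋅ (x ⋅ z).

Lemma mulBr (x y z : V) : x ⋅ (y - z) = x ⋅ y - x ⋅ z.
Proof.
have := mul_bilinear.2 (-1) x z y.
by rewrite !scaleN1r !(addrC (- _)).
Qed.

Lemma assocC (x y z : V) : assoc x y z = assoc y x z.
Proof. by case: (assoc_sym x y z). Qed.

Lemma assoc_rotl (x y z : V) : assoc x y z = assoc y z x.
Proof. by case: (assoc_sym x y z). Qed.

Lemma assoc_rev (x y z : V) : assoc x y z = assoc z y x.
Proof. by case: (assoc_sym x y z). Qed.

Lemma mulCl (x y z : V) : (x ⋅ y) ⋅ z = (y ⋅ x) ⋅ z.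
Proof. by have := assocC x y z; rewrite /associator mulCA => /addIr. Qed.

Lemma assoc_mull (x y z w : V) :
  assoc (x ⋅ y) z w = ((x ⋅ y) ⋅ z) ⋅ w - z ⋅ ((x ⋅ y) ⋅ w).
Proof. by rewrite /associator mulCA. Qed.

Lemma assoc_mulr (x y z w : V) :
  assoc z w (x ⋅ y) = x ⋅ ((z ⋅ w) ⋅ y) - z ⋅ (w ⋅ (x ⋅ y)).
Proof. by rewrite /associator mulCA. Qed.

Lemma assocMl (x y z w : V) : assoc (x ⋅ y) z w = x ⋅ assoc y z w.
Proof.
rewrite assoc_rotl assoc_mulr [assoc y z w]assoc_rotl /associator mulBr.
by rewrite (mulCA w) (mulCA z).
Qed.

Lemma assoc_mulC (x y z w : V) : assoc (x ⋅ y) z w = assoc (y ⋅ x) z w.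
Proof. by rewrite !assoc_mull (mulCl x y z) (mulCl x y w). Qed.

Lemma mulCA_mulAl (x y z w : V) : x ⋅ ((y ⋅ z) ⋅ w) = y ⋅ ((x ⋅ z) ⋅ w).
Proof.
have := assoc_mulC x y z w; rewrite !assocMl /associator !mulBr (mulCA x y).
by move/addIr.
Qed.

Lemma mulCA_mulAr (x y z w : V) : x ⋅ ((z ⋅ y) ⋅ w) = y ⋅ ((z ⋅ x) ⋅ w).
Proof. by rewrite (mulCl z y) mulCA_mulAl (mulCl x z). Qed.

Lemma mulACl (x y z w : V) : ((x ⋅ y) ⋅ z) ⋅ w = ((x ⋅ z) ⋅ y) ⋅ w.
Proof.
have := assocMl x y z w; rewrite (assocC y) -assocMl !assoc_mull mulCA_mulAr.
by move/addIr.
Qed.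

Lemma assoc_mulAC (x y z w : V) : assoc (x ⋅ y) z w = assoc (x ⋅ w) z y.
Proof. by rewrite !assocMl assoc_rev. Qed.

End LeftCommutativeAssosymmetric.

Theorem mainTheorem17 (K : fieldType) (V : lmodType K) (mul : V -> V -> V)
  (hK : char0 K) (hbil : bilinear_mul mul) (hassos : assosymmetric mul)
  (hlc : forall a b c : V, mul a (mul b c) = mul b (mul a c)) :
  forall a b c d : V,
    [/\ mul (mul (mul a b) c) d = mul (mul (mul a c) b) d,
        mul d (mul c (mul a b)) =
          2%:R *: mul d (mul (mul a b) c) + mul (mul (mul a c) d) b
          - 2%:R *: mul (mul (mul a b) d) c,
        mul d (mul (mul a c) b) =
          mul d (mul (mul a b) c) + mul (mul (mul a c) d) b
          - mul (mul (mul a b) d) c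
      & mul c (mul (mul a d) b) = mul d (mul (mul a c) b)].
Proof.
move=> a b c d.
have d_mul_acb : mul d (mul (mul a c) b) =
    mul d (mul (mul a b) c) + mul (mul (mul a c) d) b - mul (mul (mul a b) d) c.
  apply: subr_swap; rewrite -!(assoc_mull hlc).
  exact: assoc_mulAC hbil hassos hlc a c d b.
split.
- exact: mulACl hbil hassos hlc a b c d.
- have := assoc_mulr hlc a b d c.
  rewrite -(assoc_rotl hassos) (assoc_mull hlc).
  rewrite (mulCA_mulAl hbil hassos hlc a d c b) d_mul_acb => /esym/subr_swap ->.
  by rewrite !scaler_nat !mulr2n opprD !addrA.
- exact: d_mul_acb.
- exact: mulCA_mulAr hbil hassos hlc c d a b.
Qed.
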